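(* (1) Let $n\in\mathbb N$ and let $T:\mathbb R_{n+1}[z]\to\mathbb R[z]$ be linear and preserve hyperbolicity. If $f\in\mathbb R[z]$ is strictly hyperbolic of degree $n$ or $n+1$ with $T(f)=0$, then $T(g)$ is hyperbolic or zero for every $g\in\mathbb R[z]$ with $\deg g\le n+1$. (2) Let $T:\mathbb C_n[z]\to\mathbb C[z]$ be a linear stability preserver. If $f\in\mathbb C[z]$ is strictly stable of degree $n$ with $T(f)=0$, then $T(g)$ is stable or zero for every $g\in\mathbb C[z]$ with $\deg g\le n$.
   Context: A real univariate polynomial is hyperbolic if it is non-zero with only real zeros; strictly hyperbolic if moreover its zeros are simple. A univariate complex polynomial $f$ is stable if $f\neq0$ and $f(z)\neq0$ whenever $\Im z>0$; strictly stable if $f(z)\neq0$ whenever $\Im z\ge0$. $T$ preserves hyperbolicity (resp. stability) if it maps hyperbolic (resp. stable) polynomials in its domain to hyperbolic (resp. stable) polynomials or $0$. *)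

From HB Require Import structures.
From mathcomp Require Import all_boot all_order all_algebra.
From mathcomp Require Import reals.
From mathcomp Require Import complex.
Set Implicit Arguments. Unset Strict Implicit. Unset Printing Implicit Defensive.
Import Order.TTheory GRing.Theory Num.Theory.
Local Open Scope ring_scope.

Definition cpoly (R : realType) (p : {poly R}) : {poly R[i]} :=
  map_poly (real_complex R) p.

Definition hyperbolic (R : realType) (p : {poly R}) : Prop :=
  p != 0 /\ forall z : R[i], root (cpoly p) z -> Im z = 0.

Definition strictly_hyperbolic (R : realType) (p : {poly R}) : Prop :=
  hyperbolic p /\
  forall z : R[i], ~~ ((('X - z%:P) ^+ 2) %| cpoly p).

Definition stable (R : realType) (f : {poly R[i]}) : Prop :=
  f != 0 /\ forall z : R[i], 0 < Im z -> f.[z] != 0.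

Definition strictly_stable (R : realType) (f : {poly R[i]}) : Prop :=
  forall z : R[i], 0 <= Im z -> f.[z] != 0.

(* K_m[z] = polynomials of degree <= m, i.e. size <= m+1.
   T is linear on K_m[z] (values outside are irrelevant). *)
Definition linear_on (K : nzRingType) (m : nat) (T : {poly K} -> {poly K}) : Prop :=
  forall (a : K) (p q : {poly K}), (size p <= m.+1)%N -> (size q <= m.+1)%N ->
    T (a *: p + q) = a *: T p + T q.

Definition preserves (K : nzRingType) (m : nat) (P : {poly K} -> Prop)
  (T : {poly K} -> {poly K}) : Prop :=
  forall p : {poly K}, (size p <= m.+1)%N -> P p -> P (T p) \/ T p = 0.

From HB Require Import structures.
From mathcomp Require Import all_boot all_order all_algebra.
From mathcomp Require Import reals complex polyrcf.
From mathcomp Require Import ring lra.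

Set Implicit Arguments.
Unset Strict Implicit.
Unset Printing Implicit Defensive.

Import Order.TTheory GRing.Theory Num.Theory.
Import Normc.
Local Open Scope ring_scope.
Local Open Scope complex_scope.

(* If T f = 0 then T (e g + f) = e T g for every scalar e, so it suffices to find
   some e > 0 for which e g + f is itself hyperbolic (resp. stable).  Simple zeros
   survive small perturbations.  In the real case, f changes sign across each of
   its zeros; choosing e so small that |e g| < |f| at points flanking every zero,
   e g + f changes sign there too and so keeps deg f distinct real zeros, which
   forces it to be hyperbolic since its degree is at most one more.  In the complex
   case, a strictly stable f of degree n has all its zeros in the open lower
   half-plane, hence |f z| >= L (1 + |z|)^n on the closed upper half-plane, which
   beats |e g z| <= e G (1 + |z|)^n for small e, so e g + f is strictly stable. *)

Lemma linear_on0 (K : nzRingType) m (T : {poly K} -> {poly K}) : linear_on m T -> T 0 = 0.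
Proof.
move=> T_lin; have := T_lin 1 0 0; rewrite size_poly0 scaler0 addr0 scale1r => /(_ isT isT).
by rewrite -{1}[T 0]addr0 => /addrI.
Qed.

Lemma preserves_perturbed_kernel (K : idomainType) m (P : {poly K} -> Prop)
    (T : {poly K} -> {poly K}) (f g : {poly K}) (e : K) :
  linear_on m T -> preserves m P T -> T f = 0 ->
  (size f <= m.+1)%N -> (size g <= m.+1)%N -> e != 0 ->
  (forall p, P (e *: p) -> P p) -> (e *: g + f != 0 -> P (e *: g + f)) ->
  P (T g) \/ T g = 0.
Proof.
move=> T_lin T_pres Tf0 size_f size_g e_neq0 P_unscale P_h.
have size_h : (size (e *: g + f)%R <= m.+1)%N.
  by rewrite (leq_trans (size_polyD _ _)) // geq_max size_f (leq_trans (size_scale_leq _ _)).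
have T_h : T (e *: g + f) = e *: T g by rewrite T_lin // Tf0 addr0.
have [h_eq0|h_neq0] := eqVneq (e *: g + f) 0.
  by right; apply/eqP; move: T_h; rewrite h_eq0 (linear_on0 T_lin) => /esym/eqP;
     rewrite scale_poly_eq0 (negbTE e_neq0).
case: (T_pres _ size_h (P_h h_neq0)); rewrite T_h; [by move/P_unscale; left|move/eqP].
by rewrite scale_poly_eq0 (negbTE e_neq0) => /eqP; right.
Qed.

Lemma exists_small_forall (T : eqType) (R : realDomainType) (P : T -> R -> Prop)
    (s : seq T) :
  (forall a (e e' : R), 0 < e' <= e -> P a e -> P a e') ->
  (forall a, a \in s -> exists2 e : R, 0 < e & P a e) ->
  exists2 e : R, 0 < e & forall a, a \in s -> P a e.
Proof.
move=> Pdown; elim: s => [|b s IHs] Ps; first by exists 1.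
have [e1 e1_gt0 Pbe1] := Ps b (mem_head _ _).
have [e2 e2_gt0 Pse2] : exists2 e : R, 0 < e & forall a, a \in s -> P a e.
  by apply: IHs => a sa; apply: Ps; rewrite inE sa orbT.
have emin_gt0 : 0 < Num.min e1 e2 by rewrite lt_min e1_gt0.
exists (Num.min e1 e2) => // a; rewrite inE => /predU1P [->|sa].
  by apply: (Pdown _ e1) => //; apply/andP; split; rewrite ?ge_min ?lexx.
by apply: (Pdown _ e2 _ _ (Pse2 _ sa)); apply/andP; split; rewrite ?ge_min ?lexx ?orbT.
Qed.

Section SimpleRealRoots.
Variable R : rcfType.
Implicit Types (s : seq R) (d e x y : R).

Definition separated d s := {in s &, forall x y, x != y -> 2 * d < `|x - y|}.

Lemma exists_separation s : exists2 d, 0 < d & separated d s.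
Proof.
have [d d_gt0 sepd] : exists2 d : R, 0 < d & forall xy, xy \in [seq (x, y) | x <- s, y <- s] ->
    xy.1 != xy.2 -> 2 * d < `|xy.1 - xy.2|.
  apply: exists_small_forall => [xy e e' /andP [_ le_e'e] Pe /Pe|[x y] _ /=]; first lra.
  have [->|neq_xy] := eqVneq x y; first by exists 1; rewrite ?eqxx.
  have dist_gt0 : 0 < `|x - y| by rewrite normr_gt0 subr_eq0.
  by exists (`|x - y| / 4) => [|_]; rewrite ?divr_gt0 //; lra.
by exists d => // x y sx sy; apply: (sepd (x, y)); rewrite allpairs_f.
Qed.

Lemma prod_XsubC_sign_change s d x : uniq s -> 0 < d -> separated d s -> x \in s ->
  (\prod_(y <- s) ('X - y%:P)).[x - d] * (\prod_(y <- s) ('X - y%:P)).[x + d] < 0.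
Proof.
move=> uniq_s d_gt0 sep sx; rewrite (big_rem x sx) /= !hornerM !hornerXsubC.
set Q := \prod_(y <- rem x s) _.
suff QQ_gt0 : 0 < Q.[x - d] * Q.[x + d].
  have -> : (x - d - x) * Q.[x - d] * ((x + d - x) * Q.[x + d])
            = - (d * d) * (Q.[x - d] * Q.[x + d]) by ring.
  by rewrite pmulr_llt0 // oppr_lt0 mulr_gt0.
rewrite ltNge; apply/negP => QQ_le0.
have le_xd : x - d <= x + d by lra.
have [r] := polyrcf.poly_ivt le_xd QQ_le0.
rewrite in_itv /= root_prod_XsubC (mem_rem_uniq _ uniq_s) inE => /andP [rl rr] /andP [neq_rx sr].
have := sep x r sx sr; rewrite eq_sym neq_rx => /(_ isT).
have : `|x - r| <= d by rewrite ler_norml; apply/andP; split; lra.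
lra.
Qed.

Lemma sign_addl_small x y : `|x| < `|y| -> 0 < (x + y) * y.
Proof.
move=> lt_xy; have y_neq0 : y != 0 by apply: contraTneq lt_xy => ->; rewrite normr0 -leNgt.
have : `|x| * `|y| < `|y| * `|y| by rewrite ltr_pM2r ?normr_gt0.
rewrite -normrM -expr2 real_normK ?num_real // expr2.
have := ler_norm (- (x * y)); rewrite normrN mulrDl; lra.
Qed.

Lemma perturb_simple_real_roots (c : R) s (g : {poly R}) : c != 0 -> uniq s ->
  exists2 e, 0 < e & exists rs, [/\ uniq rs, size rs = size s &
    all (root (e *: g + c *: \prod_(x <- s) ('X - x%:P))) rs].
Proof.
move=> c_neq0 uniq_s; set f := c *: _.
have [d d_gt0 sep] := exists_separation s.
have le_xd x : x - d <= x + d by lra.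
have f_sign x : x \in s -> f.[x - d] * f.[x + d] < 0.
  move=> sx; rewrite !hornerZ mulrACA pmulr_rlt0 ?prod_XsubC_sign_change //.
  by rewrite -expr2 exprn_even_gt0.
set ends := [seq x - d | x <- s] ++ [seq x + d | x <- s].
have f_ends y : y \in ends -> f.[y] != 0.
  rewrite mem_cat => /orP [] /mapP [x /f_sign f_sx ->]; apply: contraTneq f_sx => ->.
    by rewrite mul0r ltxx.
  by rewrite mulr0 ltxx.
have [e e_gt0 small] : exists2 e : R, 0 < e &
    forall y, y \in ends -> `|e * g.[y]| < `|f.[y]|.
  apply: exists_small_forall => [y e e' /andP [e'_gt0 le_e'e]|y /f_ends fy_neq0].
    rewrite !normrM (gtr0_norm e'_gt0) (gtr0_norm (lt_le_trans e'_gt0 le_e'e)).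
    exact/le_lt_trans/ler_wpM2r.
  have gy_gt0 : 0 < `|g.[y]| + 1 by rewrite ltr_wpDl.
  exists (`|f.[y]| / (`|g.[y]| + 1)); first by rewrite divr_gt0 ?normr_gt0.
  rewrite normrM ger0_norm ?divr_ge0 ?addr_ge0 // mulrAC ltr_pdivrMr //.
  by rewrite ltr_pM2l ?normr_gt0 // ltrDl.
set h := e *: g + f.
have h_sign x : x \in s -> h.[x - d] * h.[x + d] <= 0.
  move=> sx; rewrite /h !hornerD !(hornerZ e).
  have ends_l : x - d \in ends by rewrite mem_cat (map_f (fun x => x - d)).
  have ends_r : x + d \in ends by rewrite mem_cat (map_f (fun x => x + d)) ?orbT.
  have := mulr_gt0 (sign_addl_small (small _ ends_l))
                   (sign_addl_small (small _ ends_r)).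
  by rewrite mulrACA (nmulr_lgt0 _ (f_sign x sx)) => /ltW.
exists e => //; exists [seq odflt 0 (has_ivt_root h (x - d) (x + d)) | x <- s]; split.
- rewrite map_inj_in_uniq // => x y sx sy eq_r; apply/eqP; apply: contraTT isT => neq_xy.
  have := ivt_root_in (le_xd x) (h_sign x sx); rewrite eq_r.
  have := ivt_root_in (le_xd y) (h_sign y sy); rewrite !in_itv /=.
  have := sep x y sx sy neq_xy; rewrite ltr_normr.
  by case/orP => ? /andP [? ?] /andP [? ?]; lra.
- by rewrite size_map.
- by apply/allP => _ /mapP [x sx ->]; apply: ivt_rootP (le_xd x) (h_sign x sx).
Qed.

End SimpleRealRoots.

Lemma nonuniq_sqr_XsubC_dvd_prod (K : idomainType) (s : seq K) : ~~ uniq s ->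
  exists x, ('X - x%:P) ^+ 2 %| \prod_(y <- s) ('X - y%:P).
Proof.
elim: s => [|a s IHs] //=; rewrite negb_and negbK => /orP [sa|/IHs [x dvd_x]].
  exists a; rewrite big_cons expr2 dvdp_mul2l ?polyXsubC_eq0 //.
  by rewrite dvdp_XsubCl root_prod_XsubC.
by exists x; rewrite big_cons dvdp_mull.
Qed.

Section Hyperbolic.
Variable R : realType.
Implicit Types (f g p q : {poly R}) (s : seq R).

Lemma cpolyM p q : cpoly (p * q) = cpoly p * cpoly q.
Proof. exact: rmorphM. Qed.

Lemma cpoly_prod_XsubC s :
  cpoly (\prod_(x <- s) ('X - x%:P)) = \prod_(z <- map (real_complex R) s) ('X - z%:P).
Proof. by rewrite /cpoly rmorph_prod big_map; apply: eq_bigr => x _ /=; rewrite map_polyXsubC. Qed.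

Lemma hyperbolicZ (c : R) p : c != 0 -> hyperbolic (c *: p) -> hyperbolic p.
Proof.
move=> c_neq0 [cp_neq0 cp_real]; split; first by apply: contraNneq cp_neq0 => ->; rewrite scaler0.
by move=> z p_z; apply: cp_real; rewrite /cpoly map_polyZ rootZ ?fmorph_eq0.
Qed.

Lemma hyperbolic_const_prod q s : size q = 1 -> hyperbolic (q * \prod_(x <- s) ('X - x%:P)).
Proof.
move=> size_q; have q_neq0 : q != 0 by rewrite -size_poly_eq0 size_q.
split; first by rewrite mulf_neq0 // monic_neq0 // monic_prod_XsubC.
have {size_q} q_const := size1_polyC (eq_leq size_q).
move=> z; rewrite cpolyM cpoly_prod_XsubC rootM q_const /cpoly map_polyC rootC fmorph_eq0.
rewrite -polyC_eq0 -q_const (negbTE q_neq0) /=.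
by rewrite root_prod_XsubC => /mapP [x _ ->]; apply/Creal_ImP/complex_realP; exists x.
Qed.

Lemma hyperbolic_of_roots p (rs : seq R) : p != 0 -> uniq rs -> all (root p) rs ->
  (size p <= (size rs).+2)%N -> hyperbolic p.
Proof.
move=> p_neq0 uniq_rs rs_roots; rewrite -uniq_rootsE in uniq_rs.
have [q p_eq] := uniq_roots_prod_XsubC rs_roots uniq_rs; rewrite {}p_eq in p_neq0 *.
have q_neq0 : q != 0 by apply: contraNneq p_neq0 => ->; rewrite mul0r.
rewrite size_Mmonic ?monic_prod_XsubC // size_prod_XsubC addnS /= -add2n leq_add2r.
move=> size_q_le2; have size_q_gt0 : (0 < size q)%N by rewrite size_poly_gt0.
have [size_q|size_q] : size q = 1%N \/ size q = 2%N.
  by move: size_q_gt0 size_q_le2; case: (size q) => [|[|[|n]]] // _ _; [left|right].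
{ exact: hyperbolic_const_prod. }
have odd_deg_q : ~~ odd (size q) by rewrite size_q.
have [x q_x] := odd_poly_root odd_deg_q.
have [q' q_eq] := factor_theorem q x q_x; rewrite q_eq -mulrA.
have -> : ('X - x%:P) * \prod_(z <- rs) ('X - z%:P) = \prod_(z <- x :: rs) ('X - z%:P).
  by rewrite big_cons.
apply: hyperbolic_const_prod; apply/eqP; rewrite -eqSS -addn1 -size_q q_eq.
rewrite size_mul ?polyXsubC_eq0 ?size_XsubC ?addn1 ?addn2 //.
by apply: contraNneq q_neq0 => q'0; rewrite q_eq q'0 mul0r.
Qed.

Lemma strictly_hyperbolic_factor p : strictly_hyperbolic p ->
  exists2 s, uniq s & p = lead_coef p *: \prod_(x <- s) ('X - x%:P).
Proof.
move=> [[p_neq0 p_real] p_simple].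
have lc_neq0 : lead_coef (cpoly p) != 0 by rewrite lead_coef_map fmorph_eq0 lead_coef_eq0.
have [r cp_eq] := closed_field_poly_normal (cpoly p).
have r_real z : z \in r -> z \is Num.real.
  by move=> rz; apply/Creal_ImP/p_real; rewrite cp_eq rootZ // root_prod_XsubC.
exists (map (@complex.Re R) r).
  have uniq_r : uniq r.
    apply/negPn/negP => /nonuniq_sqr_XsubC_dvd_prod [z dvd_z].
    by have := p_simple z; rewrite cp_eq dvdpZr // dvd_z.
  rewrite map_inj_in_uniq // => z w /r_real/complex_realP [a ->].
  by move=> /r_real/complex_realP [b ->] /= ->.
have r_eq : map (real_complex R \o @complex.Re R) r = r.
  by rewrite -[RHS]map_id; apply/eq_in_map => z /r_real/complex_realP [a ->].
apply: (@map_poly_inj _ _ (real_complex R)); rewrite -[LHS]/(cpoly p) cp_eq map_polyZ.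
by rewrite -[map_poly _ (\prod_(x <- _) _)]/(cpoly _) cpoly_prod_XsubC -map_comp r_eq lead_coef_map.
Qed.

Lemma strictly_hyperbolic_perturb f g : strictly_hyperbolic f ->
  (size g <= (size f).+1)%N ->
  exists2 e : R, 0 < e & (e *: g + f != 0 -> hyperbolic (e *: g + f)).
Proof.
move=> f_sh size_g; have [s uniq_s f_eq] := strictly_hyperbolic_factor f_sh.
have lc_neq0 : lead_coef f != 0 by rewrite lead_coef_eq0; case: f_sh => -[].
have size_f : size f = (size s).+1 by rewrite {1}f_eq size_scale // size_prod_XsubC.
have [e e_gt0 [rs [uniq_rs size_rs rs_roots]]] := perturb_simple_real_roots g lc_neq0 uniq_s.
exists e => // h_neq0; apply: hyperbolic_of_roots h_neq0 uniq_rs _ _; first by rewrite f_eq.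
rewrite size_rs (leq_trans (size_polyD _ _)) // geq_max size_f leqnSn andbT.
by rewrite (leq_trans (size_scale_leq _ _)) // -size_f.
Qed.

End Hyperbolic.

Section ComplexNorm.
Variable R : rcfType.
Implicit Types (z a : R[i]).

Lemma normc_ge0 z : 0 <= normc z.
Proof. by case: z => x y; apply: sqrtr_ge0. Qed.

Lemma normc_gt0 z : z != 0 -> 0 < normc z.
Proof.
by move=> z_neq0; rewrite lt_def normc_ge0 andbT; apply: contraNneq z_neq0 => /eq0_normc ->.
Qed.

Lemma normc_real (x : R) : normc x%:C = `|x|.
Proof. by rewrite /= expr0n addr0 sqrtr_sqr. Qed.

Lemma normcX z k : normc (z ^+ k) = normc z ^+ k.
Proof. by elim: k => [|k IHk]; rewrite ?normc1 // !exprS normcM IHk. Qed.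

Lemma normc_sum_le m (F : 'I_m -> R[i]) : normc (\sum_(i < m) F i) <= \sum_(i < m) normc (F i).
Proof.
apply: (big_ind2 (fun z x => normc z <= x)) => [|z1 x1 z2 x2 le1 le2|i _].
- by rewrite normc0.
- exact: le_trans (le_normcD _ _) (lerD le1 le2).
- exact: lexx.
Qed.

Lemma normc_Im_le z : `|complex.Im z| <= normc z.
Proof. by case: z => x y /=; rewrite -sqrtr_sqr ler_sqrt ?lerDr ?addr_ge0 ?sqr_ge0. Qed.

(* On the closed upper half-plane |z - a| is at least both -Im a and |z| - |a|. *)
Definition root_gap a := - complex.Im a / (1 + normc a - complex.Im a).

Lemma root_gap_gt0 a : complex.Im a < 0 -> 0 < root_gap a.
Proof. by move=> Ia_lt0; have := normc_ge0 a; rewrite /root_gap => ?; apply: divr_gt0; lra. Qed.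

Lemma normc_subr_ge z a : 0 <= complex.Im z -> complex.Im a < 0 ->
  root_gap a * (1 + normc z) <= normc (z - a).
Proof.
move=> Iz_ge0 Ia_lt0; have Na_ge0 := normc_ge0 a; have Nz_ge0 := normc_ge0 z.
have Im_le : - complex.Im a <= normc (z - a).
  apply: le_trans (normc_Im_le _); apply: le_trans (ler_norm _); rewrite raddfB /=; lra.
have tri : normc z <= normc (z - a) + normc a by rewrite -{1}(subrK a z) le_normcD.
rewrite /root_gap mulrAC ler_pdivrMr; last lra.
nra.
Qed.

Lemma normc_horner_prod_XsubC_ge (r : seq R[i]) z :
  {in r, forall a, complex.Im a < 0} -> 0 <= complex.Im z ->
  \prod_(a <- r) root_gap a * (1 + normc z) ^+ size r
    <= normc (\prod_(a <- r) ('X - a%:P)).[z].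
Proof.
move=> r_lower z_upper; have W_ge0 : 0 <= 1 + normc z by rewrite addr_ge0 ?normc_ge0.
elim: r r_lower => [|a r IHr] r_lower.
  by rewrite !big_nil hornerC normc1 mulr1.
have a_lower : complex.Im a < 0 by apply: r_lower; rewrite mem_head.
rewrite !big_cons hornerM hornerXsubC normcM exprS mulrACA.
apply: ler_pM.
- by rewrite mulr_ge0 // ltW ?root_gap_gt0.
- rewrite mulr_ge0 ?exprn_ge0 // big_seq prodr_ge0 // => b rb.
  by rewrite ltW ?root_gap_gt0 ?r_lower // inE rb orbT.
- exact: normc_subr_ge.
- by apply: IHr => b rb; apply: r_lower; rewrite inE rb orbT.
Qed.

Lemma normc_horner_le (p : {poly R[i]}) n z : (size p <= n.+1)%N ->
  normc p.[z] <= (\sum_(i < size p) normc p`_i) * (1 + normc z) ^+ n.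
Proof.
move=> size_p; rewrite horner_coef mulr_suml; apply: le_trans (normc_sum_le _) _.
apply: ler_sum => i _; rewrite normcM normcX; apply: ler_wpM2l; first exact: normc_ge0.
have Nz_ge0 := normc_ge0 z.
apply: (@le_trans _ _ ((1 + normc z) ^+ i)).
  by apply: lerXn2r; rewrite ?nnegrE ?lerDr // addr_ge0.
by apply: ler_weXn2l; rewrite ?lerDl // -ltnS (leq_trans (ltn_ord i)).
Qed.

End ComplexNorm.

Section Stable.
Variable R : realType.
Implicit Types (f g : {poly R[i]}) (z : R[i]).

Lemma Im_ge0 z : (0 <= 'Im z) = (0 <= complex.Im z).
Proof. by rewrite -complexIm ler0c. Qed.

Lemma stableZ (c : R[i]) f : c != 0 -> stable (c *: f) -> stable f.
Proof.
move=> c_neq0 [cf_neq0 cf_stable]; split; first by apply: contraNneq cf_neq0 => ->; rewrite scaler0.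
by move=> z /cf_stable; rewrite hornerZ mulf_eq0 negb_or => /andP [].
Qed.

Lemma strictly_stable_stable f : strictly_stable f -> stable f.
Proof.
move=> f_sstable; split => [|z /ltW]; last exact: f_sstable.
by apply: contraTneq (f_sstable 0 _) => [->|]; rewrite ?horner0 ?eqxx // Im_ge0.
Qed.

Lemma strictly_stable_perturb f g : strictly_stable f -> (size g <= size f)%N ->
  exists2 e : R, 0 < e & strictly_stable (e%:C *: g + f).
Proof.
move=> f_sstable size_g; have [r f_eq] := closed_field_poly_normal f.
have f_neq0 := (strictly_stable_stable f_sstable).1.
set c := lead_coef f in f_eq; have c_neq0 : c != 0 by rewrite lead_coef_eq0.
have size_f : size f = (size r).+1 by rewrite f_eq size_scale // size_prod_XsubC.
have r_lower : {in r, forall a, complex.Im a < 0}.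
  move=> a ra; rewrite ltNge -Im_ge0; apply/negP => /f_sstable.
  by rewrite f_eq hornerZ (eqP (_ : root _ a)) ?mulr0 ?eqxx ?root_prod_XsubC.
set L := normc c * \prod_(a <- r) root_gap a.
have L_gt0 : 0 < L.
  by rewrite mulr_gt0 ?normc_gt0 // big_seq prodr_gt0 // => a /r_lower /root_gap_gt0.
set G := \sum_(i < size g) normc g`_i.
have G_ge0 : 0 <= G by rewrite sumr_ge0 // => i _; apply: normc_ge0.
set e := L / (2 * (G + 1)); have e_gt0 : 0 < e by rewrite divr_gt0 // mulr_gt0 // ltr_wpDl.
have e_def : e * (2 * (G + 1)) = L by rewrite mulfVK // mulf_neq0 // gt_eqF // ltr_wpDl.
exists e => // z; rewrite Im_ge0 => Iz_ge0.
set W := (1 + normc z) ^+ size r.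
have W_gt0 : 0 < W by rewrite exprn_gt0 // ltr_wpDr ?normc_ge0.
have f_lower : L * W <= normc f.[z].
  rewrite f_eq hornerZ normcM -mulrA ler_wpM2l ?normc_ge0 //.
  exact: normc_horner_prod_XsubC_ge.
have g_upper : normc g.[z] <= G * W by apply: normc_horner_le; rewrite -size_f.
rewrite hornerD hornerZ addrC addr_eq0; apply/negP => /eqP /(congr1 (@normc R)).
rewrite normcN normcM normc_real gtr0_norm //.
have := normc_ge0 g.[z]; nra.
Qed.

End Stable.

Theorem mainTheorem12 (R : realType) :
  (forall (n : nat) (T : {poly R} -> {poly R}),
      linear_on n.+1 T -> preserves n.+1 (@hyperbolic R) T ->
      forall f : {poly R}, strictly_hyperbolic f ->
        (size f = n.+1 \/ size f = n.+2) -> T f = 0 ->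
        forall g : {poly R}, (size g <= n.+2)%N -> hyperbolic (T g) \/ T g = 0)
  /\
  (forall (n : nat) (T : {poly R[i]} -> {poly R[i]}),
      linear_on n T -> preserves n (@stable R) T ->
      forall f : {poly R[i]}, strictly_stable f -> size f = n.+1 -> T f = 0 ->
        forall g : {poly R[i]}, (size g <= n.+1)%N -> stable (T g) \/ T g = 0).
Proof.
split=> [n T T_lin T_pres f f_sh size_f Tf0 g size_g|n T T_lin T_pres f f_ss size_f Tf0 g size_g].
  have size_g_f : (size g <= (size f).+1)%N by case: size_f => ->; last exact: leqW.
  have [e e_gt0 h_hyp] := strictly_hyperbolic_perturb f_sh size_g_f.
  apply: (preserves_perturbed_kernel T_lin T_pres Tf0 _ size_g (lt0r_neq0 e_gt0)) => //.
    by case: size_f => ->.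
  by move=> p; apply: hyperbolicZ; rewrite lt0r_neq0.
have size_g_f : (size g <= size f)%N by rewrite size_f.
have [e e_gt0 h_ss] := strictly_stable_perturb f_ss size_g_f.
have e_neq0 : e%:C != 0 by rewrite eq_complex /= negb_and lt0r_neq0.
apply: (preserves_perturbed_kernel T_lin T_pres Tf0 _ size_g e_neq0).
- by rewrite size_f.
- by move=> p; apply: stableZ.
- by move=> _; apply: strictly_stable_stable.
Qed.
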